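(* Let $(V,\nu)$ and $(W,\mu)$ be strongly complete PN-spaces and let $T:V\to W$ be a linear operator with closed graph, i.e. whenever $x_n\to x$ strongly in $V$ and $Tx_n\to y$ strongly in $W$, then $y=Tx$. Then $T\in B(V,W)$.
   Context: A distance distribution function is a map $F:[-\infty,+\infty]\to[0,1]$ that is nondecreasing, left-continuous on $\mathbb{R}$, with $F(-\infty)=0$, $F(+\infty)=1$ and $F(0)=0$; the set of these is $\Delta^+$. $\mathcal{D}^+\subseteq\Delta^+$ denotes the proper ones, i.e. those with $\lim_{x\to+\infty}F(x)=1$. $H_0\in\Delta^+$ is $H_0(x)=0$ for $x\le 0$ and $H_0(x)=1$ for $x>0$. For $F,G\in\Delta^+$ let $\tau_M(F,G)(x)=\sup\{\min(F(s),G(t)) : s+t=x\}$. In this paper a PN-space $(V,\nu)$ is a real vector space $V$ with a map $\nu:V\to\Delta^+$, $p\mapsto\nu_p$, such that for all $p,q\in V$: $\nu_p=H_0$ iff $p=0$; $\nu_{p+q}\ge\tau_M(\nu_p,\nu_q)$ pointwise; and $\nu_{\alpha p}(x)=\nu_p(x/|\alpha|)$ for all real $\alpha\neq0$ and $x\ge 0$. Standing assumption: $\nu_p\in\mathcal{D}^+$ for every $p\in V$. For $x\in V$ and $w\in(0,1)$ put $\|x\|_w=\sup\{t\in\mathbb{R}:\nu_x(t)<w\}$; for each $w$ this is a norm on $V$, and $w\mapsto\|x\|_w$ is nondecreasing. The strong topology on $V$ is generated by the neighbourhoods $N_p(t)=\{q\in V:\nu_{p-q}(t)>1-t\}$, $p\in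 V$, $t>0$; equivalently the balls $\{x:\|x-p\|_w<r\}$ form a basis for it. A sequence $(p_n)$ converges strongly to $p$ if for every $t>0$ one has $p_n\in N_p(t)$ for all large $n$; it is strongly Cauchy if for every $t>0$ there is $N$ with $\nu_{p_n-p_m}(t)>1-t$ for all $m,n>N$. $(V,\nu)$ is strongly complete if every strongly Cauchy sequence converges strongly. $B(V,W)$ denotes the set of linear operators $V\to W$ that are continuous for the strong topologies. *)

From Stdlib Require Import Reals.
Open Scope R_scope.

Record RVS := {
  vcar :> Type;
  vzero : vcar;
  vadd : vcar -> vcar -> vcar;
  vopp : vcar -> vcar;
  vscal : R -> vcar -> vcar;
  vadd_assoc : forall x y z, vadd x (vadd y z) = vadd (vadd x y) z;
  vadd_comm : forall x y, vadd x y = vadd y x;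
  vadd_0 : forall x, vadd x vzero = x;
  vadd_opp : forall x, vadd x (vopp x) = vzero;
  vscal_assoc : forall a b x, vscal a (vscal b x) = vscal (a * b) x;
  vscal_1 : forall x, vscal 1 x = x;
  vscal_distr_v : forall a x y, vscal a (vadd x y) = vadd (vscal a x) (vscal a y);
  vscal_distr_s : forall a b x, vscal (a + b) x = vadd (vscal a x) (vscal b x)
}.

Definition vsub {V : RVS} (x y : V) : V := vadd V x (vopp V y).

(* ---------- Distance distribution functions ----------
   F is represented by its restriction to the reals; the values
   F(-oo) = 0 and F(+oo) = 1 are fixed by convention. *)
Definition is_ddf (F : R -> R) : Prop :=
  (forall x, 0 <= F x <= 1) /\
  (forall x y, x <= y -> F x <= F y) /\
  (forall x eps, 0 < eps -> exists d, 0 < d /\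
      forall y, x - d < y < x -> Rabs (F y - F x) < eps) /\
  F 0 = 0.

Definition is_proper_ddf (F : R -> R) : Prop :=
  is_ddf F /\
  (forall eps, 0 < eps -> exists M, forall x, M <= x -> Rabs (F x - 1) < eps).

Definition H0 (x : R) : R := if Rle_dec x 0 then 0 else 1.

(* nu_{p+q} >= tau_M(nu_p, nu_q) pointwise, i.e. for every x,
   sup { min(nu_p s, nu_q t) : s + t = x } <= nu_{p+q} x, which unfolds to:
   every element of the set is <= nu_{p+q} x. *)
Definition tauM_le (F G K : R -> R) : Prop :=
  forall s t, Rmin (F s) (G t) <= K (s + t).

Record PNSpace := {
  pn_vs :> RVS;
  pn_nu : pn_vs -> R -> R;
  pn_proper : forall p, is_proper_ddf (pn_nu p);
  pn_H0 : forall p, (forall x, pn_nu p x = H0 x) <-> p = vzero pn_vs;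
  pn_tri : forall p q, tauM_le (pn_nu p) (pn_nu q) (pn_nu (vadd pn_vs p q));
  pn_scal : forall (a : R) p x, a <> 0 -> 0 <= x ->
      pn_nu (vscal pn_vs a p) x = pn_nu p (x / Rabs a)
}.

Definition Nbd {V : PNSpace} (p : V) (t : R) (q : V) : Prop :=
  pn_nu V (vsub p q) t > 1 - t.

Definition strongly_open {V : PNSpace} (U : V -> Prop) : Prop :=
  forall p, U p -> exists t, 0 < t /\ forall q, Nbd p t q -> U q.

Definition strong_conv {V : PNSpace} (pn : nat -> V) (p : V) : Prop :=
  forall t, 0 < t -> exists N, forall n, (N <= n)%nat -> Nbd p t (pn n).

Definition strong_Cauchy {V : PNSpace} (pn : nat -> V) : Prop :=
  forall t, 0 < t -> exists N, forall m n, (N < m)%nat -> (N < n)%nat ->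
    pn_nu V (vsub (pn n) (pn m)) t > 1 - t.

Definition strongly_complete (V : PNSpace) : Prop :=
  forall pn : nat -> V, strong_Cauchy pn -> exists p, strong_conv pn p.

Definition is_linear {V W : RVS} (T : V -> W) : Prop :=
  (forall x y, T (vadd V x y) = vadd W (T x) (T y)) /\
  (forall a x, T (vscal V a x) = vscal W a (T x)).

Definition strongly_continuous {V W : PNSpace} (T : V -> W) : Prop :=
  forall U : W -> Prop, strongly_open U -> strongly_open (fun x => U (T x)).

Definition in_B {V W : PNSpace} (T : V -> W) : Prop :=
  is_linear T /\ strongly_continuous T.

(* First, by linearity and
   absorbency of the neighbourhoods, V is the countable union of the closures
   of the scaled preimages (n+1) T^-1(N_0(t/2)); Baire's theorem in the
   complete space V makes one of them contain a ball, and taking differences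
   shows that the closure of T^-1(N_0(t)) contains a neighbourhood of 0.
   Second, a point x of a small enough neighbourhood is approximated by
   successive corrections: x - r_n -> x with T(x - r_n) a Cauchy sequence whose
   increments lie in N_0(t/2^(n+2)).  Completeness of W gives a limit y, the
   closed graph gives y = T x, and summing the increments puts T x in N_0(t). *)

From Stdlib Require Import Reals Lra Lia Classical ClassicalEpsilon.
Open Scope R_scope.

Section VectorSpace.
Context {V : RVS}.

Lemma vadd_0l (x : V) : vadd V (vzero V) x = x.
Proof. rewrite vadd_comm; apply vadd_0. Qed.

Lemma vadd_oppl (x : V) : vadd V (vopp V x) x = vzero V.
Proof. rewrite vadd_comm; apply vadd_opp. Qed.

Lemma vadd_cancel_l (a b c : V) : vadd V a b = vadd V a c -> b = c.
Proof.
  intro H.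
  rewrite <- (vadd_0l b), <- (vadd_0l c), <- (vadd_oppl a), <- !vadd_assoc, H.
  reflexivity.
Qed.

Lemma vopp_unique (a b : V) : vadd V a b = vzero V -> b = vopp V a.
Proof. intro H. apply (vadd_cancel_l a). rewrite H, vadd_opp; reflexivity. Qed.

Lemma vopp_opp (x : V) : vopp V (vopp V x) = x.
Proof. symmetry. apply vopp_unique, vadd_oppl. Qed.

Lemma vadd_shuffle (a b c : V) : vadd V (vadd V a b) c = vadd V (vadd V a c) b.
Proof. rewrite <- !vadd_assoc, (vadd_comm _ b c); reflexivity. Qed.

Lemma vopp_add (x y : V) : vopp V (vadd V x y) = vadd V (vopp V x) (vopp V y).
Proof.
  symmetry. apply vopp_unique.
  rewrite (vadd_comm _ (vopp V x)), vadd_assoc, <- (vadd_assoc _ x y).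
  rewrite vadd_opp, vadd_0, vadd_opp; reflexivity.
Qed.

Lemma vscal_0 (x : V) : vscal V 0 x = vzero V.
Proof.
  apply (vadd_cancel_l (vscal V 0 x)).
  rewrite vadd_0, <- vscal_distr_s, Rplus_0_r; reflexivity.
Qed.

Lemma vopp_scal (x : V) : vopp V x = vscal V (-1) x.
Proof.
  symmetry. apply vopp_unique.
  rewrite <- (vscal_1 V x) at 1. rewrite <- vscal_distr_s, Rplus_opp_r.
  apply vscal_0.
Qed.

Lemma vsub_0r (x : V) : vsub x (vzero V) = x.
Proof.
  unfold vsub. rewrite <- (vopp_unique (vzero V) (vzero V)) by apply vadd_0.
  apply vadd_0.
Qed.

Lemma vsub_diag (x : V) : vsub x x = vzero V.
Proof. apply vadd_opp. Qed.

Lemma vsub_trans (x y z : V) : vadd V (vsub x y) (vsub y z) = vsub x z.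
Proof.
  unfold vsub. rewrite vadd_assoc, <- (vadd_assoc _ x), vadd_oppl, vadd_0.
  reflexivity.
Qed.

Lemma vopp_sub (x y : V) : vopp V (vsub x y) = vsub y x.
Proof. unfold vsub. rewrite vopp_add, vopp_opp, vadd_comm; reflexivity. Qed.

Lemma vscal_sub c (x y : V) : vscal V c (vsub x y) = vsub (vscal V c x) (vscal V c y).
Proof.
  unfold vsub. rewrite vscal_distr_v, !vopp_scal, !vscal_assoc, Rmult_comm.
  reflexivity.
Qed.

Lemma vadd_subKl (x w : V) : vsub (vadd V x w) x = w.
Proof. unfold vsub. rewrite vadd_shuffle, vadd_opp, vadd_0l; reflexivity. Qed.

Lemma vsub_subKr (x r : V) : vsub x (vsub x r) = r.
Proof.
  assert (Hx : vadd V (vsub x r) r = x).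
  { unfold vsub. rewrite <- vadd_assoc, vadd_oppl, vadd_0; reflexivity. }
  rewrite <- Hx at 1. apply vadd_subKl.
Qed.

Lemma vsub_sub_subl (x r r' : V) : vsub (vsub x r') (vsub x r) = vsub r r'.
Proof. rewrite <- (vsub_trans x r r'). apply vadd_subKl. Qed.

Lemma vsub_sub_interchange (p q a b : V) :
  vsub (vsub p q) (vsub a b) = vsub (vsub p a) (vsub q b).
Proof.
  unfold vsub. rewrite !vopp_add, !vopp_opp, !vadd_assoc, (vadd_shuffle p).
  reflexivity.
Qed.
End VectorSpace.

Section LinearMap.
Context {V W : RVS}.
Variable T : V -> W.
Hypothesis T_linear : is_linear T.

Lemma linear_scal c x : T (vscal V c x) = vscal W c (T x).
Proof. apply (proj2 T_linear). Qed.

Lemma linear_sub x y : T (vsub x y) = vsub (T x) (T y).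
Proof.
  unfold vsub. rewrite (proj1 T_linear), !vopp_scal, linear_scal. reflexivity.
Qed.

Lemma linear_0 : T (vzero V) = vzero W.
Proof. rewrite <- (vscal_0 (vzero V)), linear_scal, vscal_0; reflexivity. Qed.
End LinearMap.

Definition ball0 {V : PNSpace} (t : R) (x : V) : Prop := pn_nu V x t > 1 - t.

Section Neighbourhoods.
Context {V : PNSpace}.

Lemma ball0_0 t : 0 < t -> ball0 t (vzero V).
Proof.
  intro Ht. unfold ball0.
  rewrite (proj2 (pn_H0 V (vzero V)) eq_refl). unfold H0.
  destruct (Rle_dec t 0); lra.
Qed.

Lemma pn_nu_mono (x : V) s t : s <= t -> pn_nu V x s <= pn_nu V x t.
Proof. destruct (pn_proper V x) as [[_ [Hmono _]] _]. apply Hmono. Qed.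

Lemma ball0_mono s t (x : V) : s <= t -> ball0 s x -> ball0 t x.
Proof. unfold ball0. intros Hst Hs. pose proof (pn_nu_mono x s t Hst). lra. Qed.

Lemma ball0_add s t (x y : V) :
  0 < s -> 0 < t -> ball0 s x -> ball0 t y -> ball0 (s + t) (vadd V x y).
Proof.
  unfold ball0. intros Hs Ht Hx Hy.
  pose proof (pn_tri V x y s t).
  assert (1 - (s + t) < Rmin (pn_nu V x s) (pn_nu V y t)) by (apply Rmin_glb_lt; lra).
  lra.
Qed.

Lemma ball0_scal c t (x : V) :
  Rabs c <= 1 -> 0 < t -> ball0 t x -> ball0 t (vscal V c x).
Proof.
  intros Hc Ht Hx. destruct (Req_dec c 0) as [->|Hc0].
  { rewrite vscal_0. apply ball0_0; assumption. }
  assert (Habs : 0 < Rabs c) by (apply Rabs_pos_lt; assumption).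
  assert (Hdiv : t <= t / Rabs c).
  { apply (Rmult_le_reg_r (Rabs c)); [assumption|].
    unfold Rdiv. rewrite Rmult_assoc, Rinv_l by lra. nra. }
  unfold ball0. rewrite pn_scal by lra.
  pose proof (pn_nu_mono x t (t / Rabs c) Hdiv). unfold ball0 in Hx. lra.
Qed.

Lemma ball0_opp t (x : V) : 0 < t -> ball0 t x -> ball0 t (vopp V x).
Proof.
  intros. rewrite vopp_scal. apply ball0_scal; try assumption.
  rewrite Rabs_left by lra. lra.
Qed.

Lemma ball0_sub_trans s t (x y z : V) : 0 < s -> 0 < t ->
  ball0 s (vsub x y) -> ball0 t (vsub y z) -> ball0 (s + t) (vsub x z).
Proof. intros. rewrite <- (vsub_trans x y z). apply ball0_add; assumption. Qed.

Lemma ball0_sub_sym t (x y : V) : 0 < t -> ball0 t (vsub x y) -> ball0 t (vsub y x).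
Proof. intros. rewrite <- vopp_sub. apply ball0_opp; assumption. Qed.

(* Absorbency comes from properness: nu_y(M) -> 1 as M -> +oo. *)
Lemma ball0_absorbing t (y : V) :
  0 < t -> exists n, ball0 t (vscal V (/ (INR n + 1)) y).
Proof.
  intros Ht. destruct (proj2 (pn_proper V y) t Ht) as [M HM].
  destruct (INR_unbounded (M / t)) as [n Hn]. exists n.
  pose proof (pos_INR n) as Hn0.
  unfold ball0. rewrite pn_scal by (apply Rinv_neq_0_compat || idtac; lra).
  rewrite Rabs_right by (left; apply Rinv_0_lt_compat; lra).
  unfold Rdiv. rewrite Rinv_inv.
  assert (HMt : M <= t * (INR n + 1)).
  { apply (Rmult_lt_compat_r t) in Hn; [|assumption].
    unfold Rdiv in Hn. rewrite Rmult_assoc, Rinv_l in Hn by lra. nra. }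
  specialize (HM _ HMt). apply Rabs_def2 in HM. lra.
Qed.

Lemma ball0_scal_up r n (z : V) :
  0 < r -> ball0 (r / (INR n + 1)) z -> ball0 r (vscal V (INR n + 1) z).
Proof.
  intros Hr Hz. pose proof (pos_INR n). unfold ball0 in *.
  rewrite pn_scal, Rabs_right by lra.
  assert (r / (INR n + 1) <= r).
  { unfold Rdiv. apply (Rmult_le_reg_r (INR n + 1)); [lra|].
    rewrite Rmult_assoc, Rinv_l by lra. nra. }
  lra.
Qed.
End Neighbourhoods.

Lemma dependent_choice {A : Type} (P : nat -> A -> Prop)
    (Rel : nat -> A -> A -> Prop) (a0 : A) :
  P 0%nat a0 -> (forall k a, P k a -> exists b, P (S k) b /\ Rel k a b) ->
  exists s : nat -> A, s 0%nat = a0 /\ forall k, P k (s k) /\ Rel k (s k) (s (S k)).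
Proof.
  intros H0 Hstep.
  destruct (choice (fun (ka : nat * A) b =>
      P (fst ka) (snd ka) -> P (S (fst ka)) b /\ Rel (fst ka) (snd ka) b))
    as [f Hf].
  { intros [k a]. destruct (classic (P k a)) as [Ha|Ha].
    - destruct (Hstep k a Ha) as [b Hb]. exists b; auto.
    - exists a; simpl; tauto. }
  set (s := fix s k := match k with O => a0 | S j => f (j, s j) end).
  assert (HP : forall k, P k (s k)).
  { induction k; [assumption | exact (proj1 (Hf (k, s k) IHk))]. }
  exists s. split; [reflexivity|].
  intro k. split; [apply HP | exact (proj2 (Hf (k, s k) (HP k)))].
Qed.

Lemma geometric_small (c e : R) :
  0 < e -> exists N, forall n, (N <= n)%nat -> c * (/ 2) ^ n < e.
Proof.
  intro He. destruct (Rle_lt_dec c 0) as [Hc|Hc].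
  - exists 0%nat. intros n _. pose proof (pow_lt (/ 2) n ltac:(lra)). nra.
  - destruct (pow_lt_1_zero (/ 2) ltac:(rewrite Rabs_right; lra) (e / c))
      as [N HN]; [apply Rdiv_lt_0_compat; lra|].
    exists N. intros n Hn. specialize (HN n Hn).
    rewrite Rabs_right in HN by (left; apply pow_lt; lra).
    apply (Rmult_lt_compat_l c) in HN; [|lra].
    replace (c * (e / c)) with e in HN by (field; lra). exact HN.
Qed.

Section Telescope.
Context {V : PNSpace}.
Variable x : nat -> V.
Variable r : nat -> R.
Hypothesis r_pos : forall k, 0 < r k.
Hypothesis r_halving : forall k, r (S k) <= r k / 2.
Hypothesis x_step : forall k, ball0 (r k) (vsub (x (S k)) (x k)).

Lemma halving_bound k : r k <= r 0%nat * (/ 2) ^ k.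
Proof.
  induction k as [|k IH]; simpl; [lra|].
  replace (r 0%nat * (/ 2 * (/ 2) ^ k)) with (r 0%nat * (/ 2) ^ k / 2) by field.
  pose proof (r_halving k). lra.
Qed.

Lemma telescope_ball0 k m : (k < m)%nat -> ball0 (2 * r k) (vsub (x m) (x k)).
Proof.
  assert (H : forall j k, ball0 (2 * r k) (vsub (x (k + S j)) (x k))).
  { induction j as [|j IH]; intro k'.
    - rewrite Nat.add_1_r. apply (ball0_mono (r k')); [pose proof (r_pos k'); lra|].
      apply x_step.
    - replace (k' + S (S j))%nat with (S k' + S j)%nat by lia.
      apply (ball0_mono (2 * r (S k') + r k')); [pose proof (r_halving k'); lra|].
      pose proof (r_pos k'). pose proof (r_pos (S k')).
      apply ball0_sub_trans with (x (S k')); [lra | lra | apply IH | apply x_step]. }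
  intro Hkm. replace m with (k + S (m - S k))%nat by lia. apply H.
Qed.

Lemma telescope_Cauchy : strong_Cauchy x.
Proof.
  intros e He. destruct (geometric_small (4 * r 0%nat) e He) as [N HN].
  exists N. intros m n Hm Hn. change (ball0 e (vsub (x n) (x m))).
  pose proof (halving_bound N). pose proof (HN N (le_n N)). pose proof (r_pos N).
  apply (ball0_mono (2 * r N + 2 * r N)); [lra|].
  apply ball0_sub_trans with (x N); [lra | lra | apply telescope_ball0, Hn |].
  apply ball0_sub_sym; [lra | apply telescope_ball0, Hm].
Qed.
End Telescope.

Section Baire.
Context {V : PNSpace}.
Variable F : nat -> V -> Prop.
Hypothesis V_complete : strongly_complete V.
Hypothesis F_closed : forall n x,
  (forall e, 0 < e -> exists f, F n f /\ ball0 e (vsub x f)) -> F n x.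
Hypothesis F_cover : forall x, exists n, F n x.

Lemma not_F_nbd n z :
  ~ F n z -> exists e, 0 < e /\ forall f, F n f -> ~ ball0 e (vsub f z).
Proof.
  intro Hz. apply NNPP. intro Hno. apply Hz, F_closed. intros e He.
  apply NNPP. intro Hfar. apply Hno. exists e. split; [assumption|].
  intros f Hf Hfz. apply Hfar. exists f. split; [assumption|].
  apply ball0_sub_sym; assumption.
Qed.

Lemma nowhere_dense_avoid n :
  (forall x r, 0 < r -> exists z, ball0 r (vsub z x) /\ ~ F n z) ->
  forall x r, 0 < r -> exists z rho, 0 < rho /\ rho <= r / 2 /\
    ball0 r (vsub z x) /\ forall f, F n f -> ~ ball0 (3 * rho) (vsub f z).
Proof.
  intros Hdense x r Hr.
  destruct (Hdense x r Hr) as [z [Hzx Hz]].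
  destruct (not_F_nbd n z Hz) as [e [He Hfar]].
  exists z, (Rmin (r / 2) (e / 3)).
  pose proof (Rmin_l (r / 2) (e / 3)). pose proof (Rmin_r (r / 2) (e / 3)).
  split; [apply Rmin_glb_lt; lra|]. split; [assumption|]. split; [assumption|].
  intros f Hf Hfz. apply (Hfar f Hf). apply (ball0_mono (3 * Rmin (r / 2) (e / 3)));
    [lra | exact Hfz].
Qed.

(* If every F n were nowhere dense, nested balls avoiding F 0, F 1, ... would
   shrink to a point lying in no F n. *)
Theorem baire : exists n x0 r, 0 < r /\ forall z, ball0 r (vsub z x0) -> F n z.
Proof.
  apply NNPP. intro Hno.
  assert (Hdense : forall n x r, 0 < r -> exists z, ball0 r (vsub z x) /\ ~ F n z).
  { intros n x r Hr. apply NNPP. intro Hin. apply Hno. exists n, x, r.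
    split; [assumption|]. intros z Hz. apply NNPP. intro HFz. apply Hin.
    exists z; split; assumption. }
  destruct (dependent_choice (fun _ (p : V * R) => 0 < snd p)
      (fun k p q => snd q <= snd p / 2 /\ ball0 (snd p) (vsub (fst q) (fst p)) /\
         forall f, F k f -> ~ ball0 (3 * snd q) (vsub f (fst q)))
      (vzero V, 1)) as [s [_ Hs]]; [simpl; lra | |].
  { intros k [x r] Hr.
    destruct (nowhere_dense_avoid k (Hdense k) x r Hr) as [z [rho Hz]].
    exists (z, rho). simpl. tauto. }
  set (x := fun k => fst (s k)). set (r := fun k => snd (s k)).
  assert (Hpos : forall k, 0 < r k) by (intro k; apply (Hs k)).
  assert (Hhalf : forall k, r (S k) <= r k / 2) by (intro k; apply (Hs k)).
  assert (Hstep : forall k, ball0 (r k) (vsub (x (S k)) (x k)))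
    by (intro k; apply (Hs k)).
  destruct (V_complete x (telescope_Cauchy x r Hpos Hhalf Hstep)) as [p Hp].
  destruct (F_cover p) as [k Hk].
  destruct (Hp (r (S k)) (Hpos (S k))) as [N HN].
  set (m := Nat.max N (S (S k))).
  apply (proj2 (proj2 (proj2 (Hs k))) p Hk).
  change (ball0 (3 * r (S k)) (vsub p (x (S k)))).
  replace (3 * r (S k)) with (r (S k) + 2 * r (S k)) by ring.
  pose proof (Hpos (S k)).
  apply ball0_sub_trans with (x m); [lra | lra | apply HN; lia |].
  apply telescope_ball0; [exact Hpos | exact Hhalf | exact Hstep | lia].
Qed.
End Baire.

Section PreimageClosure.
Context {V W : PNSpace}.
Variable T : V -> W.
Hypothesis T_linear : is_linear T.

Definition in_cl_preball (t : R) (z : V) : Prop :=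
  forall e, 0 < e -> exists a, ball0 t (T a) /\ ball0 e (vsub z a).

Lemma in_cl_preball_closed t x :
  (forall e, 0 < e -> exists f, in_cl_preball t f /\ ball0 e (vsub x f)) ->
  in_cl_preball t x.
Proof.
  intros Hx e He. destruct (Hx (e / 2)) as [f [Hf Hxf]]; [lra|].
  destruct (Hf (e / 2)) as [a [Ha Hfa]]; [lra|].
  exists a. split; [assumption|].
  replace e with (e / 2 + e / 2) by field.
  apply ball0_sub_trans with f; [lra | lra | assumption | assumption].
Qed.

Lemma in_cl_preball_of_ball0 t x : ball0 t (T x) -> in_cl_preball t x.
Proof.
  intros Hx e He. exists x. split; [assumption|].
  rewrite vsub_diag. apply ball0_0, He.
Qed.

Lemma in_cl_preball_sub s t x y : 0 < s -> 0 < t ->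
  in_cl_preball s x -> in_cl_preball t y -> in_cl_preball (s + t) (vsub x y).
Proof.
  intros Hs Ht Hx Hy e He.
  destruct (Hx (e / 2)) as [a [Ha Hxa]]; [lra|].
  destruct (Hy (e / 2)) as [b [Hb Hyb]]; [lra|].
  exists (vsub a b). split.
  - rewrite (linear_sub T T_linear). unfold vsub.
    apply ball0_add; [lra | lra | assumption | apply ball0_opp; assumption].
  - rewrite vsub_sub_interchange. replace e with (e / 2 + e / 2) by field.
    unfold vsub at 1. apply ball0_add; [lra | lra | assumption |].
    apply ball0_opp; [lra | assumption].
Qed.

(* Baire applied to F n := (n+1) cl T^-1(N_0(t/2)), which cover V by absorbency. *)
Lemma in_cl_preball_nbd (V_complete : strongly_complete V) t :
  0 < t -> exists s, 0 < s /\ forall z, ball0 s z -> in_cl_preball t z.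
Proof.
  intros Ht.
  set (c := fun n : nat => / (INR n + 1)).
  assert (Hc : forall n, 0 < c n /\ Rabs (c n) <= 1).
  { intro n. pose proof (pos_INR n). unfold c.
    assert (0 < / (INR n + 1)) by (apply Rinv_0_lt_compat; lra).
    split; [assumption|]. rewrite Rabs_right, <- Rinv_1 by lra.
    apply Rinv_le_contravar; lra. }
  set (F := fun n x => in_cl_preball (t / 2) (vscal V (c n) x)).
  assert (F_closed : forall n x,
      (forall e, 0 < e -> exists f, F n f /\ ball0 e (vsub x f)) -> F n x).
  { intros n x Hx. apply in_cl_preball_closed. intros e He.
    destruct (Hx e He) as [f [Hf Hxf]]. exists (vscal V (c n) f).
    split; [exact Hf|]. rewrite <- vscal_sub.
    apply ball0_scal; [apply Hc | lra | exact Hxf]. }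
  assert (F_cover : forall x, exists n, F n x).
  { intro x. destruct (ball0_absorbing (t / 2) (T x)) as [n Hn]; [lra|].
    exists n. apply in_cl_preball_of_ball0. rewrite (linear_scal T T_linear). exact Hn. }
  destruct (baire F V_complete F_closed F_cover) as [n [x0 [r [Hr Hball]]]].
  pose proof (pos_INR n).
  exists (r / (INR n + 1)). split; [apply Rdiv_lt_0_compat; lra|].
  intros z Hz.
  set (w := vscal V (INR n + 1) z).
  assert (Hx0w : F n (vadd V x0 w)).
  { apply Hball. rewrite vadd_subKl. apply ball0_scal_up; assumption. }
  assert (Hx0 : F n x0) by (apply Hball; rewrite vsub_diag; apply ball0_0, Hr).
  assert (Hz_eq : z = vsub (vscal V (c n) (vadd V x0 w)) (vscal V (c n) x0)).
  { rewrite <- vscal_sub, vadd_subKl. unfold w, c.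
    rewrite vscal_assoc, Rinv_l, vscal_1 by lra. reflexivity. }
  rewrite Hz_eq. replace t with (t / 2 + t / 2) by field.
  apply in_cl_preball_sub; [lra | lra | exact Hx0w | exact Hx0].
Qed.

Lemma successive_approximation (V_complete : strongly_complete V)
    (tau : nat -> R) :
  (forall n, 0 < tau n) -> exists s, 0 < s /\ forall x, ball0 s x ->
    exists u : nat -> V, u 0%nat = vzero V /\ strong_conv u x /\
      forall n, ball0 (tau n) (vsub (T (u (S n))) (T (u n))).
Proof.
  intro Htau.
  destruct (choice (fun n s => 0 < s /\ forall z, ball0 s z -> in_cl_preball (tau n) z))
    as [sf Hsf].
  { intro n. apply in_cl_preball_nbd; [exact V_complete | apply Htau]. }
  set (sg := fun n => Rmin (sf n) ((/ 2) ^ n)).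
  assert (Hsg : forall n, 0 < sg n).
  { intro n. apply Rmin_glb_lt; [apply Hsf | apply pow_lt; lra]. }
  exists (sg 0%nat). split; [apply Hsg|]. intros x Hx.
  (* r n is the part of x not yet approximated after n corrections *)
  destruct (dependent_choice (fun n r => ball0 (sg n) r)
      (fun n r r' => exists a, r' = vsub r a /\ ball0 (tau n) (T a)) x Hx)
    as [r [Hr0 Hr]].
  { intros n rn Hrn.
    destruct (proj2 (Hsf n) rn (ball0_mono _ _ _ (Rmin_l _ _) Hrn) (sg (S n)) (Hsg (S n)))
      as [a [Ha Hra]].
    exists (vsub rn a). split; [exact Hra|]. exists a. split; [reflexivity | exact Ha]. }
  exists (fun n => vsub x (r n)). split; [rewrite Hr0; apply vsub_diag|]. split.
  - intros e He. destruct (geometric_small 1 e He) as [N HN]. exists N.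
    intros n Hn. unfold Nbd. rewrite vsub_subKr.
    apply (ball0_mono (sg n)); [|apply Hr].
    pose proof (Rmin_r (sf n) ((/ 2) ^ n)). specialize (HN n Hn). unfold sg. lra.
  - intro n. destruct (proj2 (Hr n)) as [a [Ha HTa]].
    rewrite <- (linear_sub T T_linear), Ha, vsub_sub_subl, vsub_subKr. exact HTa.
Qed.
End PreimageClosure.

Section ClosedGraph.
Context {V W : PNSpace}.
Variable T : V -> W.
Hypothesis V_complete : strongly_complete V.
Hypothesis W_complete : strongly_complete W.
Hypothesis T_linear : is_linear T.
Hypothesis T_closed_graph : forall (xn : nat -> V) (x : V) (y : W),
  strong_conv xn x -> strong_conv (fun n => T (xn n)) y -> y = T x.

Lemma closed_graph_ball0 t :
  0 < t -> exists s, 0 < s /\ forall x, ball0 s x -> ball0 t (T x).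
Proof.
  intro Ht.
  set (tau := fun n => t / 4 * (/ 2) ^ n).
  assert (Htau : forall n, 0 < tau n).
  { intro n. unfold tau. pose proof (pow_lt (/ 2) n ltac:(lra)). nra. }
  assert (Htau_half : forall n, tau (S n) <= tau n / 2).
  { intro n. unfold tau. simpl. right. field. }
  destruct (successive_approximation T T_linear V_complete tau Htau) as [s [Hs Happ]].
  exists s. split; [exact Hs|]. intros x Hx.
  destruct (Happ x Hx) as [u [Hu0 [Hux HTu]]].
  destruct (W_complete _ (telescope_Cauchy (fun n => T (u n)) tau Htau Htau_half HTu))
    as [y Hy].
  rewrite <- (T_closed_graph u x y Hux Hy).
  destruct (Hy (t / 2)) as [N HN]; [lra|].
  assert (HTuN : ball0 (t / 2) (vsub (T (u (S N))) (T (u 0%nat)))).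
  { apply (ball0_mono (2 * tau 0%nat)); [unfold tau; simpl; lra|].
    apply (telescope_ball0 (fun n => T (u n)));
      [exact Htau | exact Htau_half | exact HTu | lia]. }
  rewrite <- (vsub_0r y), <- (linear_0 T T_linear), <- Hu0.
  replace t with (t / 2 + t / 2) by field.
  apply ball0_sub_trans with (T (u (S N))); [lra | lra | apply HN; lia | exact HTuN].
Qed.
End ClosedGraph.

Theorem theorem4p10 (V W : PNSpace) (T : V -> W) :
  strongly_complete V -> strongly_complete W ->
  is_linear T ->
  (forall (xn : nat -> V) (x : V) (y : W),
      strong_conv xn x -> strong_conv (fun n => T (xn n)) y -> y = T x) ->
  in_B T.
Proof.
  intros HcV HcW Hlin Hgraph. split; [exact Hlin|].
  intros U HU p Hp. destruct (HU (T p) Hp) as [t [Ht HtU]].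
  destruct (closed_graph_ball0 T HcV HcW Hlin Hgraph t Ht) as [s [Hs Hball]].
  exists s. split; [exact Hs|]. intros q Hq. apply HtU.
  unfold Nbd. rewrite <- (linear_sub T Hlin). apply Hball, Hq.
Qed.
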